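(* In the setting described in the context, for any $a\in\mathfrak{z}$ and any positive integer $n$, $$\mathrm{S}^r(a^n)=\sum_{i=0}^n r^{n-i}(1-r)^i\, a^i\ast \mathrm{S}(a^{n-i}),$$ where $\mathrm{S}=\mathrm{S}^1$. Equivalently, for a formal variable $u$, $\mathrm{S}^r\!\left(\frac{1}{1-au}\right)=\frac{1}{1-a(1-r)u}\ast \mathrm{S}\!\left(\frac{1}{1-aru}\right)$.
   Context: $\mathfrak{A}$ is a commutative $\mathbb{Q}$-algebra, $A$ a set of non-commutative letters, $\mathfrak{h}^1$ the non-commutative polynomial algebra over $\mathfrak{A}$ generated by $A$, and $\mathfrak{z}$ the $\mathfrak{A}$-span of $A$, equipped with a commutative (not necessarily unital) $\mathfrak{A}$-algebra product $\circ$. This acts on $\mathfrak{h}^1$ by $\mathfrak{A}$-linearity and $a\circ 1_w=0$, $a\circ(bw)=(a\circ b)w$ ($a,b\in A$, $w$ a word, $1_w$ the empty word). The harmonic product $\ast$ on $\mathfrak{h}^1$ is the $\mathfrak{A}$-bilinear product with $1_w\ast w=w\ast 1_w=w$ and $aw_1\ast bw_2=a(w_1\ast bw_2)+b(aw_1\ast w_2)+(a\circ b)(w_1\ast w_2)$ for $a,b\in A$ and words $w,w_1,w_2$ (extended $r$-linearly and to formal power series in $u$). For a variable $r$, $\mathrm{S}^r$ is the $\mathfrak{A}[r]$-linear map on $\mathfrak{h}^1[r]$ with $\mathrm{S}^r(1_w)=1_w$ and $\mathrm{S}^r(aw)=a\mathrm{S}^r(w)+r\,a\circ\mathrm{S}^r(w)$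 for $a\in A$ and words $w$; $\mathrm{S}:=\mathrm{S}^1$. Here $a^n$ denotes the $n$-fold concatenation power of $a$ ($a^0=1_w$). *)

From HB Require Import structures.
From mathcomp Require Import all_boot all_algebra.
From mathcomp Require Import finmap.
From mathcomp.multinomials Require Import monalg.

Set Implicit Arguments.
Unset Strict Implicit.
Unset Printing Implicit Defensive.

Import GRing.Theory.
Local Open Scope ring_scope.

Definition word (A : choiceType) := seq A.
HB.instance Definition _ (A : choiceType) := Choice.on (word A).

Lemma word_unit (A : choiceType) (x y : word A) :
  x ++ y = [::] -> x = [::] /\ y = [::].
Proof. by case: x => // ; case: y. Qed.

HB.instance Definition _ (A : choiceType) :=
  @Choice_isMonomialDef.Build (word A) [::] (@cat A) (@catA A) (@cat0s A)
    (@cats0 A) (@word_unit A).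

Section HarmonicDefs.
Variables (K : comRingType) (A : choiceType).

(* h^1 over K: the non-commutative polynomial algebra K<A>,
   finitely supported K-linear combinations of words; its ring
   product is concatenation. *)
Definition h1 := {malg K[word A]}.
Definition zsp := {malg K[A]}.

Definition letter (a : A) : h1 := << [:: a] : word A >>.

Definition zlift (z : zsp) : h1 := \sum_(x <- msupp z) z@_x *: letter x.

Definition circz (circ : A -> A -> zsp) (z1 z2 : zsp) : zsp :=
  \sum_(x <- msupp z1) \sum_(y <- msupp z2) (z1@_x * z2@_y) *: circ x y.

Variable circ : A -> A -> zsp.

Definition circ_w (x : A) (w : word A) : h1 :=
  match w with
  | [::] => 0
  | b :: w' => zlift (circ x b) * << (w' : word A) >>
  end.

Definition circ_act (z : zsp) (p : h1) : h1 :=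
  \sum_(x <- msupp z) \sum_(w <- msupp p) (z@_x * p@_w) *: circ_w x w.

Fixpoint harm_w (u : word A) : word A -> h1 :=
  match u with
  | [::] => fun v => << v >>
  | a :: u' =>
      fix hv (v : word A) : h1 :=
        match v with
        | [::] => << (a :: u' : word A) >>
        | b :: v' => letter a * harm_w u' v + letter b * hv v'
                     + zlift (circ a b) * harm_w u' v'
        end
  end.

Definition harm (p q : h1) : h1 :=
  \sum_(u <- msupp p) \sum_(v <- msupp q) (p@_u * q@_v) *: harm_w u v.

Fixpoint Sr_w (r : K) (w : word A) : h1 :=
  match w with
  | [::] => 1
  | a :: w' => letter a * Sr_w r w' + r *: circ_act << a >> (Sr_w r w')
  end.

Definition Sr (r : K) (p : h1) : h1 := \sum_(w <- msupp p) p@_w *: Sr_w r w.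

End HarmonicDefs.

(* Extension of scalars from R to R[r] = {poly R}. *)
Definition polyz (R : comRingType) (A : choiceType) (z : zsp R A)
  : zsp {poly R} A :=
  \sum_(x <- msupp z) << (z@_x)%:P *g x >>.

Definition polycirc (R : comRingType) (A : choiceType)
  (circ : A -> A -> zsp R A) : A -> A -> zsp {poly R} A :=
  fun a b => polyz (circ a b).

From HB Require Import structures.
From mathcomp Require Import all_boot all_algebra.
From mathcomp Require Import finmap.
From mathcomp.multinomials Require Import monalg.
Import GRing.Theory.
Local Open Scope ring_scope.

(* Write T p := a p + a ∘ p for the step of S = S^1, so that
   S^r(a^(n+1)) = a S^r(a^n) + r a ∘ S^r(a^n) = (1 - r) a S^r(a^n) + r T(S^r(a^n)).
   The grid G(i, m) := a^i ∗ S(a^m) obeys G(0, m+1) = T G(0, m), G(i+1, 0) = a G(i, 0)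
   and, by the recursion of ∗, G(i+1, m+1) = a G(i, m+1) + T G(i+1, m).  For any such
   grid the weighted antidiagonal sums Q_n := Σ_i r^(n-i) (1-r)^i G(i, n-i) satisfy
   Q_(n+1) = (1 - r) a Q_n + r T Q_n, the recursion of S^r(a^n); induction on n concludes. *)

Section LinearFunctions.
Context {K : comNzRingType}.

Section LinearFun.
Context {U V : lmodType K} {f : U -> V}.
Hypothesis f_linear : linear f.

Let F : {linear U -> V} := HB.pack f (GRing.isLinear.Build K U V *:%R f f_linear).

Lemma linear_fun_sum I (r : seq I) (P : pred I) E :
  f (\sum_(i <- r | P i) E i) = \sum_(i <- r | P i) f (E i).
Proof. exact: (linear_sum F). Qed.

Lemma linear_fun0 : f 0 = 0.
Proof. exact: (linear0 F). Qed.

Lemma linear_funD u v : f (u + v) = f u + f v.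
Proof. exact: (linearD F). Qed.

Lemma linear_funZ c u : f (c *: u) = c *: f u.
Proof. exact: (linearZ_LR F). Qed.

End LinearFun.

Lemma add_fun_linear (U V : lmodType K) (f g : U -> V) :
  linear f -> linear g -> linear (f \+ g).
Proof. by move=> fL gL c u v /=; rewrite fL gL scalerDr addrACA. Qed.

Lemma sub_fun_linear (U V : lmodType K) (f g : U -> V) :
  linear f -> linear g -> linear (f \- g).
Proof. by move=> fL gL c u v /=; rewrite fL gL scalerBr opprD addrACA. Qed.

Lemma scale_fun_linear (U V : lmodType K) (d : K) (f : U -> V) :
  linear f -> linear (d \*: f).
Proof. by move=> fL c u v /=; rewrite fL scalerDr !scalerA mulrC. Qed.

Lemma null_fun_linear (U V : lmodType K) : linear (\0 : U -> V).
Proof. by move=> c u v /=; rewrite scaler0 addr0. Qed.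

End LinearFunctions.

Section MalgLift.
Context {K : comNzRingType}.

Lemma linear_malg_eq (X : choiceType) (V : lmodType K) (f g : {malg K[X]} -> V) :
  linear f -> linear g -> (forall x, f << x >> = g << x >>) -> forall p, f p = g p.
Proof.
move=> fL gL fg p; rewrite (monalgE p) !(linear_fun_sum fL, linear_fun_sum gL).
apply: eq_bigr => x _; have -> : << p@_x *g x >> = p@_x *: << x >>.
  by apply/malgP => y; rewrite mcoeffZ !mcoeffU mulr_natr.
by rewrite linear_funZ // linear_funZ // fg.
Qed.

Definition mlift {X : choiceType} {V : lmodType K} (g : X -> V) (p : {malg K[X]}) : V :=
  \sum_(x <- msupp p) p@_x *: g x.

Definition mlift2 {X Y : choiceType} {V : lmodType K} (F : X -> Y -> V)
    (p : {malg K[X]}) (q : {malg K[Y]}) : V :=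
  \sum_(x <- msupp p) \sum_(y <- msupp q) (p@_x * q@_y) *: F x y.

Section Lift.
Variables (X : choiceType) (V : lmodType K).

Lemma mliftEw (g : X -> V) {p} {d : {fset X}} :
  (msupp p `<=` d)%fset -> mlift g p = \sum_(x <- d) p@_x *: g x.
Proof.
move=> le; rewrite /mlift (big_fset_incl _ le) // => x _ /mcoeff_outdom ->.
by rewrite scale0r.
Qed.

Lemma mlift_linear (g : X -> V) : linear (mlift g).
Proof.
move=> c p q; have le : (msupp (c *: p + q) `<=` msupp p `|` msupp q)%fset.
  exact: fsubset_trans (msuppD_le _ _) (fsetSU _ (msuppZ_le _ _)).
rewrite (mliftEw _ le) (mliftEw _ (fsubsetUl _ (msupp q))).
rewrite (mliftEw _ (fsubsetUr (msupp p) _)) scaler_sumr -big_split.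
by apply: eq_bigr => x _; rewrite mcoeffD mcoeffZ scalerDl scalerA.
Qed.

Lemma mliftU (g : X -> V) x : mlift g << x >> = g x.
Proof. by rewrite /mlift msuppU oner_eq0 big_seq_fset1 mcoeffUU scale1r. Qed.

End Lift.

Section Lift2.
Variables (X Y : choiceType) (V : lmodType K) (F : X -> Y -> V).

Lemma mlift2El p q : mlift2 F p q = mlift (fun x => mlift (F x) q) p.
Proof.
rewrite /mlift2 /mlift; apply: eq_bigr => x _; rewrite scaler_sumr.
by apply: eq_bigr => y _; rewrite scalerA.
Qed.

Lemma mlift2Er p q : mlift2 F p q = mlift (fun y => mlift (F^~ y) p) q.
Proof.
rewrite /mlift2 /mlift exchange_big; apply: eq_bigr => y _; rewrite scaler_sumr.
by apply: eq_bigr => x _; rewrite scalerA mulrC.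
Qed.

Lemma mlift2_linearl q : linear (mlift2 F ^~ q).
Proof. by move=> c u v /=; rewrite !mlift2El mlift_linear. Qed.

Lemma mlift2_linearr p : linear (mlift2 F p).
Proof. by move=> c u v; rewrite !mlift2Er mlift_linear. Qed.

Lemma mlift2U x y : mlift2 F << x >> << y >> = F x y.
Proof. by rewrite mlift2El !mliftU. Qed.

End Lift2.
End MalgLift.

Definition antidiag_sum {K : nzRingType} {V : lmodType K} (r : K)
    (G : nat -> nat -> V) (n : nat) : V :=
  \sum_(i < n.+1) (r ^+ (n - i) * (1 - r) ^+ i) *: G i (n - i)%N.

Section AntidiagRecurrence.
Context {K : comNzRingType} {V : lmodType K} {L T : V -> V}.
Hypotheses (L_linear : linear L) (T_linear : linear T).
Context {G : nat -> nat -> V}.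
Hypotheses (G0S : forall m, G 0 m.+1 = T (G 0 m))
           (GS0 : forall i, G i.+1 0 = L (G i 0))
           (GSS : forall i m, G i.+1 m.+1 = L (G i m.+1) + T (G i.+1 m)).

Lemma G_antidiag_rec n i : (i <= n.+1)%N ->
  G i (n.+1 - i) = (if i is j.+1 then L (G j (n - j)) else 0)
                   + (if (i <= n)%N then T (G i (n - i)) else 0).
Proof.
case: i => [_|j] /=; first by rewrite add0r !subn0 G0S.
rewrite ltnS subSS leq_eqVlt => /predU1P[-> | lt_jn].
  by rewrite !subnn ltnn addr0 GS0.
by rewrite lt_jn -(subnSK lt_jn) GSS.
Qed.

Lemma antidiag_sumS r n : antidiag_sum r G n.+1 =
  (1 - r) *: L (antidiag_sum r G n) + r *: T (antidiag_sum r G n).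
Proof.
rewrite /antidiag_sum (linear_fun_sum L_linear) (linear_fun_sum T_linear).
under eq_bigr => i _ do rewrite (G_antidiag_rec n i (ltn_ord i)) scalerDr.
rewrite big_split big_ord_recl [\sum_(i < n.+2) _]big_ord_recr /= ltnn.
rewrite !scaler0 add0r addr0.
rewrite !scaler_sumr; congr (_ + _); apply: eq_bigr => i _.
  by rewrite linear_funZ // /bump leq0n add1n add0n subSS exprS scalerA mulrCA.
have le_in : (i <= n)%N := ltn_ord i.
by rewrite le_in linear_funZ // subSn // exprS scalerA mulrA.
Qed.

End AntidiagRecurrence.

Section QuasiShuffle.
Variables (K : comNzRingType) (A : choiceType) (circ : A -> A -> zsp K A).
Local Notation h := (h1 K A).

Lemma letterM (x : A) (w : word A) : letter K x * << w >> = << x :: w >> :> h.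
Proof. by rewrite malgM_def fgmulUU mulr1. Qed.

Lemma h1_scalerAr c (p q : h) : p * (c *: q) = c *: (p * q).
Proof.
have scalar_central (s : h) : s * c%:MP = c%:MP * s.
  move: s; apply: linear_malg_eq.
  - by move=> d u v /=; rewrite mulrDl -scalerAl.
  - by move=> d u v /=; rewrite !mul_malgC scalerDr !scalerA mulrC.
  by move=> w; rewrite !malgM_def !fgmulUU mulr1 mul1r (@mulm1 (word A)) (@mul1m (word A)).
by rewrite -mul_malgC mulrA scalar_central -mulrA mul_malgC.
Qed.

Lemma mulr_linear (p : h) : linear ( *%R p).
Proof. by move=> c u v; rewrite mulrDr h1_scalerAr. Qed.

Lemma zlift_linear : linear (@zlift K A).
Proof. exact: mlift_linear. Qed.

Lemma circz_linearl y : linear (circz circ ^~ y).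
Proof. exact: mlift2_linearl. Qed.

Lemma circz_linearr z : linear (circz circ z).
Proof. exact: mlift2_linearr. Qed.

Lemma circ_act_linearl p : linear (circ_act circ ^~ p).
Proof. exact: mlift2_linearl. Qed.

Lemma circ_act_linearr z : linear (circ_act circ z).
Proof. exact: mlift2_linearr. Qed.

Lemma harm_linearl q : linear (harm circ ^~ q).
Proof. exact: mlift2_linearl. Qed.

Lemma harm_linearr p : linear (harm circ p).
Proof. exact: mlift2_linearr. Qed.

Lemma Sr_linear r : linear (Sr circ r).
Proof. exact: mlift_linear. Qed.

Lemma zliftU (x : A) : zlift << x >> = letter K x.
Proof. exact: mliftU. Qed.

Lemma circzU (x y : A) : circz circ << x >> << y >> = circ x y.
Proof. exact: mlift2U. Qed.

Lemma circ_actU (x : A) (w : word A) : circ_act circ << x >> << w >> = circ_w circ x w.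
Proof. exact: mlift2U. Qed.

Lemma harmU (u v : word A) : harm circ << u >> << v >> = harm_w circ u v.
Proof. exact: mlift2U. Qed.

Lemma SrU r (w : word A) : Sr circ r << w >> = Sr_w circ r w.
Proof. exact: mliftU. Qed.

Let scalerMl c (p q : h) : (c *: p) * q = c *: (p * q) := esym (scalerAl c p q).

Let linearE := (zlift_linear, circz_linearl, circz_linearr, circ_act_linearl,
  circ_act_linearr, harm_linearl, harm_linearr, Sr_linear, mulrDl, mulrDr,
  scalerMl, h1_scalerAr).

Ltac solve_linear :=
  lazymatch goal with
  | |- linear (fun u => @?f u - @?g u) =>
      apply: (sub_fun_linear _ _ f g); solve_linear
  | |- linear (fun u => @?f u + @?g u) =>
      apply: (add_fun_linear _ _ f g); solve_linear
  | |- linear (fun u => ?c *: @?f u) =>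
      apply: (scale_fun_linear _ _ c f); solve_linear
  | |- _ => move=> ? ? ? /=; rewrite ?linearE
  end.

Lemma circ_act_zliftM z y p :
  circ_act circ z (zlift y * p) = zlift (circz circ z y) * p.
Proof.
move: z; apply: linear_malg_eq; try by solve_linear.
move=> x; move: y; apply: linear_malg_eq; try by solve_linear.
move=> b; move: p; apply: linear_malg_eq; try by solve_linear.
by move=> w; rewrite !zliftU circzU letterM circ_actU.
Qed.

Lemma circ_act1 z : circ_act circ z 1 = 0.
Proof.
move: z; apply: linear_malg_eq; first by solve_linear.
  exact: null_fun_linear.
by move=> x; rewrite circ_actU.
Qed.

Lemma Sr1 r : Sr circ r 1 = 1.
Proof. exact: SrU. Qed.

Lemma Sr_zliftM r z p :
  Sr circ r (zlift z * p) = zlift z * Sr circ r p + r *: circ_act circ z (Sr circ r p).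
Proof.
move: z; apply: linear_malg_eq; try by solve_linear.
move=> x; move: p; apply: linear_malg_eq; try by solve_linear.
by move=> w; rewrite zliftU letterM !SrU.
Qed.

Lemma harm1l q : harm circ 1 q = q.
Proof.
move: q; apply: linear_malg_eq; [exact: harm_linearr | by [] |].
by move=> v; rewrite harmU.
Qed.

Lemma harm1r p : harm circ p 1 = p.
Proof.
move: p; apply: linear_malg_eq; [exact: harm_linearl | by [] |].
by move=> [|x u]; rewrite harmU.
Qed.

Lemma harm_zliftM z y p q :
  harm circ (zlift z * p) (zlift y * q) =
  zlift z * harm circ p (zlift y * q) + zlift y * harm circ (zlift z * p) q
  + zlift (circz circ z y) * harm circ p q.
Proof.
move: z; apply: linear_malg_eq; try by solve_linear.
move=> x; move: y; apply: linear_malg_eq; try by solve_linear.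
move=> b; move: p; apply: linear_malg_eq; try by solve_linear.
move=> u; move: q; apply: linear_malg_eq; try by solve_linear.
by move=> v; rewrite !zliftU !letterM !harmU circzU.
Qed.

Section ZliftPowers.
Variable a : zsp K A.
Local Notation x := (zlift a).

Definition Sr_step r (p : h) : h := x * p + r *: circ_act circ a p.

Lemma Sr_step_linear r : linear (Sr_step r).
Proof. by rewrite /Sr_step; solve_linear. Qed.

Lemma Sr_exprS r n : Sr circ r (x ^+ n.+1) = Sr_step r (Sr circ r (x ^+ n)).
Proof. by rewrite exprS Sr_zliftM. Qed.

Lemma Sr_step_interpolate r p :
  (1 - r) *: (x * p) + r *: Sr_step 1 p = Sr_step r p.
Proof. by rewrite /Sr_step scale1r scalerDr addrA -scalerDl subrK scale1r. Qed.

Lemma harm_zliftM_circ_act p q :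
  harm circ (x * p) (circ_act circ a q) =
  x * harm circ p (circ_act circ a q) + circ_act circ a (harm circ (x * p) q)
  - zlift (circz circ a a) * harm circ p q.
Proof.
move: q; apply: linear_malg_eq; try by solve_linear.
case=> [|y w].
  have -> : << [::] >> = 1 :> h by [].
  rewrite circ_act1 !harm1r !(linear_fun0 (harm_linearr _)) circ_act_zliftM.
  by rewrite mulr0 add0r subrr.
have cancel_Q (X Y Z Q : h) : X + Y + Z = X + (Q + Y + Z) - Q.
  by rewrite -(addrA Q) (addrC Q) addrA addrK addrA.
rewrite -(letterM y w) -(zliftU y); move: << y >> << w >> => b {}q.
rewrite (circ_act_zliftM a b q) [LHS](harm_zliftM a (circz circ a b) p q).
rewrite [in RHS](harm_zliftM a b p q) 2!(linear_funD (circ_act_linearr a)).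
(* The rewrites are localized: failing to match a similar product is expensive. *)
rewrite [X in _ = _ + (X + _ + _) - _](circ_act_zliftM a a).
rewrite [X in _ = _ + (_ + X + _) - _](circ_act_zliftM a b).
rewrite [X in _ = _ + (_ + _ + X) - _]circ_act_zliftM.
exact: cancel_Q.
Qed.

Lemma harm_zliftM_Sr_step p q :
  harm circ (x * p) (Sr_step 1 q) =
  x * harm circ p (Sr_step 1 q) + Sr_step 1 (harm circ (x * p) q).
Proof.
have cancel_C (X1 X2 X3 X4 C : h) :
  X1 + X2 + C + (X3 + X4 - C) = X1 + X3 + (X2 + X4).
  by rewrite addrACA subrr addr0 addrACA.
rewrite /Sr_step !scale1r !(linear_funD (harm_linearr _)) mulrDr.
rewrite (harm_zliftM a a p q) harm_zliftM_circ_act.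
exact: cancel_C.
Qed.

Definition harm_Sr_pow i m : h := harm circ (x ^+ i) (Sr circ 1 (x ^+ m)).

Lemma Sr_expr_antidiag r n : Sr circ r (x ^+ n) = antidiag_sum r harm_Sr_pow n.
Proof.
have G0S m : harm_Sr_pow 0 m.+1 = Sr_step 1 (harm_Sr_pow 0 m).
  by rewrite /harm_Sr_pow !harm1l Sr_exprS.
have GS0 i : harm_Sr_pow i.+1 0 = x * harm_Sr_pow i 0.
  by rewrite /harm_Sr_pow Sr1 !harm1r exprS.
have GSS i m : harm_Sr_pow i.+1 m.+1 =
    x * harm_Sr_pow i m.+1 + Sr_step 1 (harm_Sr_pow i.+1 m).
  by rewrite /harm_Sr_pow [x ^+ i.+1]exprS Sr_exprS harm_zliftM_Sr_step.
elim: n => [|n IH].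
  by rewrite /antidiag_sum big_ord1 /= /harm_Sr_pow !expr0 !Sr1 harm1l mulr1 scale1r.
rewrite Sr_exprS IH (antidiag_sumS (mulr_linear x) (Sr_step_linear 1) G0S GS0 GSS).
by rewrite Sr_step_interpolate.
Qed.

End ZliftPowers.
End QuasiShuffle.

Theorem proposition2p3
  (R : comRingType)
  (RQalg : forall m : nat, exists y : R, y * (m.+1)%:R = 1)
  (A : choiceType) (circ : A -> A -> zsp R A)
  (circC : forall z1 z2 : zsp R A, circz circ z1 z2 = circz circ z2 z1)
  (circA : forall z1 z2 z3 : zsp R A,
     circz circ (circz circ z1 z2) z3 = circz circ z1 (circz circ z2 z3))
  (a : zsp R A) (n : nat) (hn : (0 < n)%N) :
  let c := polycirc circ in
  let ah : h1 {poly R} A := zlift (polyz a) in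
  Sr c 'X (ah ^+ n)
  = \sum_(i < n.+1)
      ('X ^+ (n - i) * (1 - 'X) ^+ i) *: harm c (ah ^+ i) (Sr c 1 (ah ^+ (n - i))).
Proof. exact: Sr_expr_antidiag. Qed.
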